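(* Let $A\in\mathbb{R}^{r\times n}$ ($r\le n$) have full row rank with singular values $\sigma_1=\sigma_2=\dots=\sigma_r$, let $F\in\mathbb{R}^{K\times n}$ with $FA^T\ne0$, and let $\lambda'>0$. Let $D^*=FA^T(AA^T)^{-1}$, $\tilde D^*=FA^T(AA^T+\lambda'I)^{-1}$, and for $M\in\mathbb{R}^{K\times r}$ let $\gamma(M)=\|M\|_F^2\|A\|_F^2/\|MA\|_F^2$. Then $\gamma(\tilde D^* )=\gamma(D^* )=r$.
   Context: $D^*$ and $\tilde D^*$ are the solutions of the unregularized and $\ell_2$-regularized linear regression problems $\min_D\|F-DA\|_F^2$ and $\min_D\|F-DA\|_F^2+\lambda'\|D\|_F^2$; $\gamma$ is the (relative) spectral risk. *)

From mathcomp Require Import all_boot all_order all_algebra.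
From mathcomp Require Import reals.
Set Implicit Arguments. Unset Strict Implicit. Unset Printing Implicit Defensive.
Import Order.TTheory GRing.Theory Num.Theory.
Local Open Scope ring_scope.

Definition frob2 {R : realType} {m p : nat} (M : 'M[R]_(m, p)) : R :=
  \sum_(i < m) \sum_(j < p) M i j ^+ 2.

Definition is_singular_values {R : realType} {r n : nat}
  (A : 'M[R]_(r, n)) (sigma : 'rV[R]_r) : Prop :=
  (forall i, 0 <= sigma 0 i) /\
  (forall i j : 'I_r, (i <= j)%N -> sigma 0 j <= sigma 0 i) /\
  exists (U : 'M[R]_r) (V : 'M[R]_(n, r)),
    U^T *m U = 1%:M /\ U *m U^T = 1%:M /\ V^T *m V = 1%:M /\
    A = U *m diag_mx sigma *m V^T.

Definition gamma {R : realType} {K r n : nat}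
  (A : 'M[R]_(r, n)) (M : 'M[R]_(K, r)) : R :=
  frob2 M * frob2 A / frob2 (M *m A).

(** When all singular values of A equal some c, A A^T = c^2 I, so A is a
    tight frame: ||M A||_F^2 = c^2 ||M||_F^2 and ||A||_F^2 = r c^2, hence
    gamma(M) = r for every nonzero M.  Both D* and the ridge solution are
    nonzero multiples of F A^T, since (A A^T)^-1 and (A A^T + lambda' I)^-1
    are nonzero multiples of the identity. *)

From mathcomp Require Import all_boot all_order all_algebra.
From mathcomp Require Import reals.
From mathcomp Require Import ring.
Set Implicit Arguments. Unset Strict Implicit. Unset Printing Implicit Defensive.
Import Order.TTheory GRing.Theory Num.Theory.
Local Open Scope ring_scope.

Section Frobenius.

Variable R : realType.

Lemma frob2_trace m p (M : 'M[R]_(m, p)) : frob2 M = \tr (M *m M^T).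
Proof.
rewrite /frob2 /mxtrace; apply: eq_bigr => i _.
by rewrite mxE; apply: eq_bigr => j _; rewrite !mxE expr2.
Qed.

Lemma frob2_eq0 m p (M : 'M[R]_(m, p)) : (frob2 M == 0) = (M == 0).
Proof.
apply/idP/eqP => [/eqP M0 | ->]; last first.
  by rewrite /frob2 big1 // => i _; rewrite big1 // => j _; rewrite mxE expr0n.
have row_sum_ge0 i : 0 <= \sum_(j < p) M i j ^+ 2 by apply: sumr_ge0 => j _; apply: sqr_ge0.
apply/matrixP => i j; rewrite mxE; apply/eqP; rewrite -sqrf_eq0; apply/eqP.
have row_eq0 := psumr_eq0P (fun i _ => row_sum_ge0 i) M0 (i := i) isT.
exact: (psumr_eq0P (fun j _ => sqr_ge0 (M i j)) row_eq0 (i := j) isT).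
Qed.

Lemma mulmx_trmx_eq0 m p (M : 'M[R]_(m, p)) : (M *m M^T == 0) = (M == 0).
Proof.
apply/eqP/eqP => [MMt0 | ->]; last by rewrite mul0mx.
by apply/eqP; rewrite -frob2_eq0 frob2_trace MMt0 linear0.
Qed.

Lemma frob2_mulmx_tight K r n (A : 'M[R]_(r, n)) (M : 'M[R]_(K, r)) d :
  A *m A^T = d%:M -> frob2 (M *m A) = d * frob2 M.
Proof.
move=> AAt; rewrite !frob2_trace trmx_mul mulmxA -(mulmxA M) AAt.
by rewrite mul_mx_scalar -scalemxAl linearZ.
Qed.

Lemma gamma_tight_frame K r n (A : 'M[R]_(r, n)) (M : 'M[R]_(K, r)) d :
  A *m A^T = d%:M -> d != 0 -> M != 0 -> gamma A M = r%:R.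
Proof.
move=> AAt d_neq0 M_neq0.
have M_frob2_neq0 : frob2 M != 0 by rewrite frob2_eq0.
rewrite /gamma (frob2_mulmx_tight M AAt) [frob2 A]frob2_trace AAt mxtrace_scalar.
by field; apply/andP.
Qed.

End Frobenius.

Lemma diag_mx_const (R : nzRingType) r (s : 'rV[R]_r) (i0 : 'I_r) :
  (forall i j, s 0 i = s 0 j) -> diag_mx s = (s 0 i0)%:M.
Proof.
by move=> s_const; apply/matrixP => i j; rewrite !mxE (s_const i i0).
Qed.

Lemma mulmx_trmx_scalar_svd (R : comNzRingType) r n (A : 'M[R]_(r, n))
    (U : 'M[R]_r) (V : 'M[R]_(n, r)) (c : R) :
  U *m U^T = 1%:M -> V^T *m V = 1%:M -> A = U *m c%:M *m V^T ->
  A *m A^T = (c ^+ 2)%:M.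
Proof.
move=> UUt VtV ->; rewrite !mul_mx_scalar -scalemxAl linearZ /= trmx_mul trmxK.
rewrite -scalemxAr -scalemxAl scalerA -expr2 -!mulmxA (mulmxA V^T) VtV mul1mx.
by rewrite UUt scale_scalar_mx mulr1.
Qed.

Lemma equal_singular_values_mulmx_trmx (R : realType) r n
    (A : 'M[R]_(r, n)) (s : 'rV[R]_r) :
  is_singular_values A s -> (forall i j, s 0 i = s 0 j) ->
  exists c, A *m A^T = (c ^+ 2)%:M.
Proof.
case: r A s => [|r] A s [_ [_ [U [V [_ [UUt [VtV defA]]]]]]] s_const.
  by exists 0; rewrite !thinmx0.
exists (s 0 ord0); apply: mulmx_trmx_scalar_svd UUt VtV _.
by rewrite -(diag_mx_const ord0 s_const).
Qed.

Theorem corollary4 (R : realType) (K r n : nat)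
  (A : 'M[R]_(r, n)) (F : 'M[R]_(K, n)) (lam : R) :
  (r <= n)%N ->
  \rank A = r ->
  (exists sigma : 'rV[R]_r, is_singular_values A sigma /\
     forall i j : 'I_r, sigma 0 i = sigma 0 j) ->
  F *m A^T != 0 ->
  0 < lam ->
  let Dstar := F *m A^T *m invmx (A *m A^T) in
  let Dtilde := F *m A^T *m invmx (A *m A^T + lam%:M) in
  gamma A Dtilde = r%:R /\ gamma A Dstar = r%:R.
Proof.
move=> _ _ [s [svd_s s_const]] FAt_neq0 lam_gt0 /=.
have [c AAt] := equal_singular_values_mulmx_trmx svd_s s_const.
have c2_neq0 : c ^+ 2 != 0.
  apply: contra FAt_neq0 => /eqP c2_eq0.
  move: AAt; rewrite c2_eq0 raddf0 => /eqP; rewrite mulmx_trmx_eq0 => /eqP ->.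
  by rewrite trmx0 mulmx0.
have gamma_scaled t : t != 0 -> gamma A (t *: (F *m A^T)) = r%:R.
  move=> t_neq0; apply: gamma_tight_frame AAt c2_neq0 _.
  by rewrite scaler_eq0 negb_or t_neq0.
rewrite AAt -raddfD /= !invmx_scalar !mul_mx_scalar.
split; apply: gamma_scaled; rewrite invr_eq0 //.
by rewrite gt_eqF // ltr_wpDl // sqr_ge0.
Qed.
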